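(* Let $G$ be a connected graph on $n$ vertices with $2\leq n\leq 7$. If $\psi_{n-1}(G)=2$, then $\psi_n(G)=1$.
   Context: All graphs are finite and simple. For a graph $G$ and a positive integer $k$, a $k$-path vertex cover ($k$-PVC) of $G$ is a set $S$ of vertices such that every path on $k$ vertices in $G$ contains at least one vertex of $S$ (if $G$ has no path on $k$ vertices, the empty set is a $k$-PVC). $\psi_k(G)$ denotes the minimum cardinality of a $k$-PVC of $G$. *)

From mathcomp Require Import all_boot.
Set Implicit Arguments. Unset Strict Implicit. Unset Printing Implicit Defensive.

Definition simple_graph (T : finType) (e : rel T) : Prop :=
  symmetric e /\ irreflexive e.

Definition is_path_seq (T : finType) (e : rel T) (p : seq T) : bool :=
  uniq p && match p with [::] => true | x :: q => path e x q end.

Definition kpvc (T : finType) (e : rel T) (k : nat) (S : {set T}) : bool :=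
  [forall p : k.-tuple T, is_path_seq e p ==> has (mem S) p].

(* psi_k(G): minimum cardinality of a k-PVC (the full vertex set is a k-PVC for k >= 1,
   so #|T| is a valid default for the minimum). *)
Definition psi (T : finType) (e : rel T) (k : nat) : nat :=
  \big[minn/#|T|]_(S : {set T} | kpvc e k S) #|S|.

Definition connected_graph (T : finType) (e : rel T) : Prop :=
  forall x y : T, connect e x y.

(* If psi_(n-1)(G) = 2, no single vertex x meets every path on n - 1 vertices, so G - x
   has a Hamiltonian path for every x.  Suppose G has none.  Then every vertex x has
   degree at least 3: for a neighbour y of x, the Hamiltonian path of G - y passes
   through x, and x cannot be one of its ends.  Take the Hamiltonian path u ... v of
   G - w; w is adjacent to neither end.  Since deg u + deg v >= 6 > n - 2, some vertex
   y of the path is adjacent to u while its predecessor is adjacent to v, which closes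
   the path into a cycle; attaching a neighbour of w to that cycle gives a Hamiltonian
   path of G.  Finally, a Hamiltonian path makes psi_n(G) = 1, as every path on n
   vertices contains all of them. *)

From mathcomp Require Import all_boot.
From mathcomp Require Import zify.
Set Implicit Arguments. Unset Strict Implicit.

Section Paths.
Variables (T : finType) (e : rel T).

Definition hamiltonian_path (p : seq T) : Prop := is_path_seq e p /\ size p = #|T|.

Lemma mem_of_uniq_card (s : seq T) x : uniq s -> #|T| <= size s -> x \in s.
Proof.
move=> us hs; apply: contraT => xs.
have /card_uniqP /= card_xs : uniq (x :: s) by rewrite /= xs.
by have := max_card (mem (x :: s)); rewrite card_xs ltnNge hs.
Qed.

Lemma mem_of_uniq_avoiding (s : seq T) x y :
  uniq s -> #|T| <= (size s).+1 -> y \notin s -> x != y -> x \in s.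
Proof.
move=> us hs ys xy; have := @mem_of_uniq_card (y :: s) x.
by rewrite /= inE (negbTE xy) ys us; apply.
Qed.

Lemma is_path_seq_cons x y s :
  is_path_seq e (y :: s) -> x \notin y :: s -> e x y -> is_path_seq e (x :: y :: s).
Proof. by rewrite /is_path_seq /= => /andP [-> ->] -> ->. Qed.

Lemma is_path_seq_adj s1 s2 x y : is_path_seq e (s1 ++ x :: y :: s2) -> e x y.
Proof.
case: s1 => [|z s1] /= /andP [_]; first by case/andP.
by rewrite cat_path => /andP [_ /=] /and3P [].
Qed.

Lemma is_path_seq_rot_cycle (c : seq T) w z :
  uniq c -> cycle e c -> w \notin c -> z \in c -> e w z ->
  exists s, is_path_seq e (w :: s) /\ size s = size c.
Proof.
move=> uc cc wc zc ewz; case: (rot_to zc) => i s rot_c.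
exists (z :: s); split; last by rewrite -rot_c size_rot.
have p_zs : path e z s.
  by move: cc; rewrite -(rot_cycle i) rot_c /= rcons_path => /andP [].
have u_zs : uniq (z :: s) by rewrite -rot_c rot_uniq.
have w_zs : w \notin z :: s by rewrite -rot_c mem_rot.
by rewrite /is_path_seq /= ewz p_zs -/(uniq (z :: s)) u_zs andbT w_zs.
Qed.

Hypothesis esym : symmetric e.

Lemma is_path_seq_rev s : is_path_seq e (rev s) = is_path_seq e s.
Proof.
rewrite /is_path_seq rev_uniq; case: s => [|x s] //.
rewrite lastI rev_rcons -lastI rev_path; congr (_ && _).
by apply: eq_path => a b; rewrite esym.
Qed.

(* The path [u a' y b'] closes into a cycle through the chords [u y] and [last b', last a']. *)
Lemma cycle_of_crossing u a' y b' :
  path e u (a' ++ y :: b') -> e u y -> e (last y b') (last u a') ->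
  cycle e (u :: a' ++ rev (y :: b')).
Proof.
rewrite cat_path => /andP [pa /= /andP [_ pb]] euy el.
rewrite /= rcons_cat cat_path pa /= rcons_path.
have -> : last (last u a') (rev (y :: b')) = y by rewrite rev_cons last_rcons.
rewrite esym euy andbT lastI rev_rcons /= esym el /= rev_path.
by rewrite (@eq_path _ _ e) // => a b; rewrite esym.
Qed.

Lemma card_pred_le_indices (x0 : T) (s : seq T) (f : pred T) :
  {subset f <= s} -> #|f| <= #|[set i : 'I_(size s) | f (nth x0 s i)]|.
Proof.
move=> fs; apply: leq_trans (leq_imset_card (fun i : 'I_(size s) => nth x0 s i) _).
apply/subset_leq_card/subsetP => y fy; have ys := fs y fy.
by apply/imsetP; exists (Ordinal (etrans (index_mem y s) ys)); rewrite ?inE /= nth_index.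
Qed.

Lemma nth_belast x0 u (p : seq T) i :
  i < size p -> nth x0 (belast u p) i = last u (take i p).
Proof.
move=> ip; rewrite -{1}(cat_take_drop i p) belast_cat (drop_nth x0 ip).
by rewrite nth_cat size_belast size_take ip ltnn subnn.
Qed.

(* Pigeonhole on the positions [i < size p]: those adjacent to [u] and those whose
   predecessor is adjacent to [last u p] must meet. *)
Lemma crossing_split u (p : seq T) :
  {subset e u <= p} -> {subset e (last u p) <= belast u p} ->
  size p < #|e u| + #|e (last u p)| ->
  exists a' y b', [/\ p = a' ++ y :: b', e u y & e (last u p) (last u a')].
Proof.
move=> Nu Nv sizeN; set v := last u p in Nv sizeN.
pose A := [set i : 'I_(size p) | e u (nth u p i)].
pose B := [set i : 'I_(size p) | e v (nth u (belast u p) i)].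
have [i] : exists i, i \in A :&: B.
  apply/card_gt0P; have := cardsUI A B; have := max_card (A :|: B).
  have := card_pred_le_indices u Nu.
  have := card_pred_le_indices u Nv; rewrite size_belast card_ord -/A -/B.
  lia.
rewrite !inE => /andP [euy evx].
exists (take i p), (nth u p i), (drop i.+1 p); split => //.
- by rewrite -drop_nth // cat_take_drop.
- by rewrite -(nth_belast u).
Qed.

End Paths.

Section Psi.
Variables (T : finType) (e : rel T).

Lemma psi_le_card k (S : {set T}) : kpvc e k S -> psi e k <= #|S|.
Proof.
move=> coverS; rewrite /psi; have : S \in index_enum {set T} by rewrite mem_index_enum.
elim: (index_enum _) => [|S' r IHr] //; rewrite inE big_cons.
case/orP => [/eqP <- | /IHr le_r]; first by rewrite coverS geq_minl.
by case: ifP => // _; rewrite geq_min le_r orbT.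
Qed.

Lemma psi_gt0_of_path (p : seq T) : is_path_seq e p -> 0 < size p -> 0 < psi e (size p).
Proof.
move=> pp; case: p pp => [|x p] //= pp _; rewrite /psi.
elim/big_ind: _ => [|m n|S coverS]; first by apply/card_gt0P; exists x.
  by rewrite leq_min => -> ->.
have /implyP /(_ pp) /hasP [y _ yS] := forallP coverS (in_tuple (x :: p)).
by apply/card_gt0P; exists y.
Qed.

Lemma avoiding_path_of_psi_gt1 k x :
  1 < psi e k -> exists p, [/\ is_path_seq e p, size p = k & x \notin p].
Proof.
move=> psi_gt1; have : ~~ kpvc e k [set x].
  by apply: contraTN psi_gt1 => /psi_le_card; rewrite cards1 -leqNgt.
rewrite negb_forall => /existsP [p]; rewrite negb_imply => /andP [pp x_notin_p].
exists p; split; rewrite ?size_tuple //.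
by apply: contra x_notin_p => xp; apply/hasP; exists x; rewrite ?inE.
Qed.

Lemma psi_card_eq1 (p : seq T) : 0 < #|T| -> hamiltonian_path e p -> psi e #|T| = 1.
Proof.
move=> T_gt0 [pp sp]; case: p pp sp => [|x p] pp sp; first by rewrite -sp in T_gt0.
apply/eqP; rewrite eqn_leq -{2}sp psi_gt0_of_path // andbT -(cards1 x).
apply/psi_le_card/forallP => q; apply/implyP => /andP [uq _].
by apply/hasP; exists x; rewrite ?inE // mem_of_uniq_card // size_tuple.
Qed.

End Psi.

Section VertexDeletedTraceable.
Variables (T : finType) (e : rel T).
Hypotheses (esym : symmetric e) (eirr : irreflexive e).
Hypothesis has_neighbour : forall x, exists y, e x y.
Hypothesis deleted_traceable :
  forall x, exists p, [/\ is_path_seq e p, size p = #|T|.-1 & x \notin p].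

Lemma hamiltonian_path_of_endpoint w q :
  is_path_seq e q -> size q = #|T|.-1 -> w \notin q ->
  e w (head w q) || e w (last w q) -> exists p, hamiltonian_path e p.
Proof.
have T_gt0 : 0 < #|T| by apply/card_gt0P; exists w.
case: q => [|x q] pq sq wq /=; first by rewrite eirr.
case/orP => [ewx | ewl].
  exists (w :: x :: q); split; first exact: is_path_seq_cons.
  by rewrite /= -/(size (x :: q)) sq prednK.
exists (w :: rev (x :: q)); split; last by rewrite /= size_rev sq prednK.
rewrite [x :: q]lastI rev_rcons; apply: is_path_seq_cons => //.
  by rewrite -rev_rcons -lastI is_path_seq_rev.
by rewrite -rev_rcons -lastI mem_rev.
Qed.

Lemma degree_ge3_or_hamiltonian x : 3 <= #|e x| \/ exists p, hamiltonian_path e p.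
Proof.
have [y exy] := has_neighbour x; have [q [pq sq yq]] := deleted_traceable y.
have T_gt0 : 0 < #|T| by apply/card_gt0P; exists x.
have xy : x != y by apply: contraTneq exy => ->; rewrite eirr.
have uq : uniq q by case/andP: pq.
have xq : x \in q by apply: (mem_of_uniq_avoiding uq _ yq xy); rewrite sq prednK.
case/splitPr: xq pq sq yq uq => a' b' pq sq yq uq.
have eyx : e y x by rewrite esym.
case: (lastP a') pq sq yq uq => [|a'' a] pq sq yq uq.
  by right; apply: (hamiltonian_path_of_endpoint pq sq yq); rewrite eyx.
case: b' pq sq yq uq => [|b b''] pq sq yq uq.
  right; apply: (hamiltonian_path_of_endpoint pq sq yq).
  by rewrite cats1 last_rcons eyx orbT.
left; have eax : e a x.
  by apply: (@is_path_seq_adj _ _ a'' (b :: b'')); rewrite -cat_rcons.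
have exb : e x b by apply: (@is_path_seq_adj _ _ (rcons a'' a) b'').
have ya : a != y by apply: contraNneq yq => <-; rewrite mem_cat mem_rcons mem_head.
have yb : b != y by apply: contraNneq yq => <-; rewrite mem_cat !inE eqxx !orbT.
have ab : a != b.
  move: uq; rewrite cat_uniq => /and3P [_ + _]; apply: contraNneq => <-.
  by apply/hasP; exists a; rewrite ?mem_rcons !inE eqxx ?orbT.
have /card_uniqP card_aby : uniq [:: a; b; y] by rewrite /= !inE negb_or ab ya yb.
rewrite -[3]card_aby; apply/subset_leq_card/subsetP => z.
by rewrite !inE => /or3P [] /eqP ->; rewrite unfold_in //= esym.
Qed.

Lemma hamiltonian_path_exists (w : T) : #|T| <= 7 -> exists p, hamiltonian_path e p.
Proof.
move=> T_le7; have T_gt0 : 0 < #|T| by apply/card_gt0P; exists w.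
have [q [pq sq wq]] := deleted_traceable w.
have uq : uniq q by case/andP: pq.
have in_q x : x != w -> x \in q.
  by move=> xw; apply: (mem_of_uniq_avoiding uq _ wq xw); rewrite sq prednK.
have [z ewz] := has_neighbour w.
have zw : z != w by apply: contraTneq ewz => ->; rewrite eirr.
case: q pq sq wq uq in_q => [|u p] pq sq wq uq in_q; first by have := in_q z zw.
set v := last u p.
case: (boolP (e w u || e w v)); first exact: (hamiltonian_path_of_endpoint pq sq wq).
rewrite negb_or => /andP [nwu nwv].
have Nu : {subset e u <= p}.
  move=> y; rewrite unfold_in => euy.
  have yu : y != u by apply: contraTneq euy => ->; rewrite eirr.
  have : y \in u :: p by apply: in_q; apply: contraNneq nwu => <-; rewrite esym.
  by rewrite inE (negbTE yu).
have Nv : {subset e v <= belast u p}.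
  move=> y; rewrite unfold_in => evy.
  have yv : y != v by apply: contraTneq evy => ->; rewrite eirr.
  have : y \in u :: p by apply: in_q; apply: contraNneq nwv => <-; rewrite esym.
  by rewrite lastI mem_rcons inE (negbTE yv).
have [du|//] := degree_ge3_or_hamiltonian u.
have [dv|//] := degree_ge3_or_hamiltonian v.
have [a' [y [b' [p_eq euy eva]]]] : exists a' y b',
    [/\ p = a' ++ y :: b', e u y & e v (last u a')].
  apply: crossing_split Nu Nv _; move: sq T_le7 du dv => /=; rewrite -/v.
  (* [set] merges the convertible but syntactically distinct occurrences of [#|T|]. *)
  by set n := #|T|; lia.
set c := u :: a' ++ rev (y :: b').
have c_perm : perm_eq c (u :: p) by rewrite /c perm_cons p_eq perm_cat2l perm_rev.
have cc : cycle e c.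
  apply: cycle_of_crossing => //; first by rewrite -p_eq; case/andP: pq.
  by have -> : last y b' = v by rewrite /v p_eq last_cat.
have [s [ps ss]] : exists s, is_path_seq e (w :: s) /\ size s = size c.
  apply: (is_path_seq_rot_cycle _ cc _ _ ewz).
  - by rewrite (perm_uniq c_perm).
  - by rewrite (perm_mem c_perm).
  - by rewrite (perm_mem c_perm); apply: in_q.
exists (w :: s); split => //.
by rewrite /= ss (perm_size c_perm) sq prednK.
Qed.

End VertexDeletedTraceable.

Lemma connected_has_neighbour (T : finType) (e : rel T) :
  connected_graph e -> 1 < #|T| -> forall x, exists y, e x y.
Proof.
move=> conn T_gt1 x; have : 0 < #|[set~ x]| by rewrite cardsC1; case: #|T| T_gt1.
case/card_gt0P => z; rewrite !inE => zx.
case/connectP: (conn x z) => [[|y p]] /=; first by move=> _ zx'; rewrite zx' eqxx in zx.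
by case/andP => exy _ _; exists y.
Qed.

Theorem mainTheorem13 (T : finType) (e : rel T) :
  simple_graph e -> connected_graph e ->
  2 <= #|T| <= 7 ->
  psi e (#|T| - 1) = 2 ->
  psi e #|T| = 1.
Proof.
move=> [esym eirr] conn /andP [T_ge2 T_le7] psi2.
have /card_gt0P [w _] := ltnW T_ge2.
have deleted x : exists p, [/\ is_path_seq e p, size p = #|T|.-1 & x \notin p].
  by rewrite -subn1; apply: avoiding_path_of_psi_gt1; rewrite psi2.
have [p ham_p] :=
  hamiltonian_path_exists esym eirr (connected_has_neighbour conn T_ge2) deleted w T_le7.
exact: psi_card_eq1 (ltnW T_ge2) ham_p.
Qed.
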